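(* Let $\mathfrak{g}$ be a Leibniz algebra, $\mathfrak{b}$ a two-sided ideal of $\mathfrak{g}$, and $\mathfrak{a}=\mathfrak{g}/\mathfrak{b}$. Then there exist a Leibniz algebra $\mathfrak{q}$ and a two-sided ideal $\mathfrak{m}$ of $\mathfrak{q}$ such that: (a) $[\mathfrak{g},\mathfrak{g}]_{\mathrm{Lie}}\cap\mathfrak{b}\cong \mathfrak{q}/\mathfrak{m}$; (b) $\mathfrak{m}\cong\mathcal{M}^{\mathrm{Lie}}(\mathfrak{g})$; (c) $\mathcal{M}^{\mathrm{Lie}}(\mathfrak{a})$ is an epimorphic image of $\mathfrak{q}$.
   Context: Fix a field $\mathbb{K}$ with $\frac12\in\mathbb{K}$. A Leibniz algebra is a $\mathbb{K}$-vector space with a bilinear bracket satisfying $[x,[y,z]]=[[x,y],z]-[[x,z],y]$. For two-sided ideals $\mathfrak{m},\mathfrak{n}$, $[\mathfrak{m},\mathfrak{n}]_{\mathrm{Lie}}$ is the subspace spanned by all $[m,n]+[n,m]$, $m\in\mathfrak{m},n\in\mathfrak{n}$. For a Leibniz algebra $\mathfrak{g}$ with a free presentation $0\to\mathfrak{r}\to\mathfrak{f}\to\mathfrak{g}\to0$ ($\mathfrak{f}$ a free Leibniz algebra, $\mathfrak{r}$ the kernel), the Schur $\mathrm{Lie}$-multiplier is $\mathcal{M}^{\mathrm{Lie}}(\mathfrak{g})=\frac{\mathfrak{r}\cap[\mathfrak{f},\mathfrak{f}]_{\mathrm{Lie}}}{[\mathfrak{f},\mathfrak{r}]_{\mathrm{Lie}}}$;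 up to isomorphism it does not depend on the chosen free presentation. *)

From mathcomp Require Import all_boot all_algebra.
From Stdlib Require Import ClassicalEpsilon.

Set Implicit Arguments.
Unset Strict Implicit.
Unset Printing Implicit Defensive.

Import GRing.Theory.
Local Open Scope ring_scope.

Record alg (K : fieldType) := Alg {
  car :> Type;
  azero : car;
  aadd : car -> car -> car;
  aopp : car -> car;
  ascale : K -> car -> car;
  abr : car -> car -> car
}.

Arguments azero {K A} : rename.
Arguments aadd {K A} : rename.
Arguments aopp {K A} : rename.
Arguments ascale {K A} : rename.
Arguments abr {K A} : rename.

Section Defs.
Variable K : fieldType.

Definition is_leibniz (A : alg K) : Prop :=
  (forall x y z : A, aadd x (aadd y z) = aadd (aadd x y) z) /\
  (forall x y : A, aadd x y = aadd y x) /\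
  (forall x : A, aadd azero x = x) /\
  (forall x : A, aadd (aopp x) x = azero) /\
  (forall (a b : K) (x : A), ascale a (ascale b x) = ascale (a * b) x) /\
  (forall x : A, ascale 1 x = x) /\
  (forall (a : K) (x y : A), ascale a (aadd x y) = aadd (ascale a x) (ascale a y)) /\
  (forall (a b : K) (x : A), ascale (a + b) x = aadd (ascale a x) (ascale b x)) /\
  (forall x y z : A, abr (aadd x y) z = aadd (abr x z) (abr y z)) /\
  (forall x y z : A, abr x (aadd y z) = aadd (abr x y) (abr x z)) /\
  (forall (a : K) (x y : A), abr (ascale a x) y = ascale a (abr x y)) /\
  (forall (a : K) (x y : A), abr x (ascale a y) = ascale a (abr x y)) /\
  (forall x y z : A,
      abr x (abr y z) = aadd (abr (abr x y) z) (aopp (abr (abr x z) y))).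

Definition is_subspace (A : alg K) (S : A -> Prop) : Prop :=
  S azero /\ (forall x y, S x -> S y -> S (aadd x y)) /\
  (forall a x, S x -> S (ascale a x)).

Definition is_ideal (A : alg K) (I : A -> Prop) : Prop :=
  is_subspace I /\ (forall x y, I y -> I (abr x y)) /\
  (forall x y, I x -> I (abr x y)).

Lemma ideal_zero (A : alg K) (I : A -> Prop) : is_ideal I -> I azero.
Proof. by case=> [[]]. Qed.

Inductive span (A : alg K) (X : A -> Prop) : A -> Prop :=
| span_in x : X x -> span X x
| span_zero : span X azero
| span_add x y : span X x -> span X y -> span X (aadd x y)
| span_scale a x : span X x -> span X (ascale a x).

Definition lie_br (A : alg K) (M N : A -> Prop) : A -> Prop :=
  span (fun z => exists x y, M x /\ N y /\ z = aadd (abr x y) (abr y x)).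

Definition allA (A : alg K) : A -> Prop := fun _ => True.

Definition is_hom (A B : alg K) (f : A -> B) : Prop :=
  f azero = azero /\
  (forall x y, f (aadd x y) = aadd (f x) (f y)) /\
  (forall a x, f (ascale a x) = ascale a (f x)) /\
  (forall x y, f (abr x y) = abr (f x) (f y)).

Lemma hom_zero (A B : alg K) (f : A -> B) : is_hom f -> f azero = azero.
Proof. by case. Qed.

Definition isomorphic (A B : alg K) : Prop :=
  exists f : A -> B, is_hom f /\ bijective f.

Definition epimorphic_image_of (B A : alg K) : Prop :=
  exists f : A -> B, is_hom f /\ forall y : B, exists x, f x = y.

Section Subquot.
Variables (A : alg K) (S N : A -> Prop) (hS : S azero).

Definition cls (x : A) : A -> Prop := fun y => N (aadd y (aopp x)).

Definition sq_car := {c : A -> Prop | exists x, S x /\ c = cls x}.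

Definition sq_rep (c : sq_car) : A :=
  proj1_sig (constructive_indefinite_description _ (proj2_sig c)).

Definition sq_zero : sq_car :=
  exist _ (cls azero) (ex_intro _ azero (conj hS erefl)).

(* the class of x (x is in S in every use; junk value otherwise) *)
Definition sq_mk (x : A) : sq_car :=
  match excluded_middle_informative (S x) with
  | left h => exist _ (cls x) (ex_intro _ x (conj h erefl))
  | right _ => sq_zero
  end.

Definition subquot : alg K :=
  @Alg K sq_car sq_zero
    (fun c d => sq_mk (aadd (sq_rep c) (sq_rep d)))
    (fun c => sq_mk (aopp (sq_rep c)))
    (fun a c => sq_mk (ascale a (sq_rep c)))
    (fun c d => sq_mk (abr (sq_rep c) (sq_rep d))).
End Subquot.

Definition quotient (A : alg K) (I : A -> Prop) : alg K :=
  @subquot A (@allA A) I Logic.I.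

Definition subalg (A : alg K) (S : A -> Prop) (hS : S azero) : alg K :=
  @subquot A S (fun x => x = azero) hS.

Definition is_free (X : Type) (F : alg K) (i : X -> F) : Prop :=
  is_leibniz F /\
  forall H : alg K, is_leibniz H -> forall h : X -> H,
    exists! phi : F -> H, is_hom phi /\ (forall x, phi (i x) = h x).

Record free_pres (g : alg K) := FreePres {
  fp_X : Type;
  fp_F : alg K;
  fp_i : fp_X -> fp_F;
  fp_free : is_free fp_i;
  fp_pi : fp_F -> g;
  fp_hom : is_hom fp_pi;
  fp_surj : forall y : g, exists x, fp_pi x = y
}.

Definition fp_R (g : alg K) (P : free_pres g) : fp_F P -> Prop :=
  fun x : fp_F P => fp_pi x = azero.
Arguments fp_R : clear implicits.

Definition schur_lie (g : alg K) (P : free_pres g) : alg K :=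
  @subquot (fp_F P)
    (fun x => fp_R g P x /\ lie_br (@allA _) (@allA _) x)
    (lie_br (@allA _) (fp_R g P))
    (conj (hom_zero (fp_hom P)) (span_zero _)).

End Defs.

(* Fix a free presentation g = f/r with projection π and let s = π⁻¹(b). Then π
   induces θ : q -> g on q = (s ∩ [f,f]_Lie)/[f,r]_Lie. Since π maps [f,f]_Lie
   onto [g,g]_Lie, the image of θ is [g,g]_Lie ∩ b, and its kernel m is
   (r ∩ [f,f]_Lie)/[f,r]_Lie, the Schur Lie-multiplier read off from this
   presentation: this gives (a) and (b).
   For (c), take a presentation g/b = f'/r'. Freeness yields α : f -> f' over
   g -> g/b and β : f' -> f with α ∘ β ≡ id modulo r'. As r ⊆ s, α induces
   q -> (r' ∩ [f',f']_Lie)/[f',r']_Lie, which is onto because an endomorphism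
   congruent to the identity modulo r' moves [f',f']_Lie only inside
   [f',r']_Lie. No step divides by 2. *)

From mathcomp Require Import all_boot all_algebra.
From Stdlib Require Import ClassicalEpsilon FunctionalExtensionality.
From Stdlib Require Import PropExtensionality ProofIrrelevance.

Set Implicit Arguments.
Unset Strict Implicit.
Unset Printing Implicit Defensive.

Import GRing.Theory.
Local Open Scope ring_scope.

Ltac leibniz_axiom hA :=
  let ax := fresh in pose proof hA as ax; red in ax; decompose [and] ax; auto.

Section LeibnizArithmetic.
Variables (K : fieldType) (A : alg K).
Hypothesis hA : is_leibniz A.

Definition asub (x y : A) := aadd x (aopp y).
Definition symbr (x y : A) := aadd (abr x y) (abr y x).

Lemma addaA (x y z : A) : aadd x (aadd y z) = aadd (aadd x y) z.
Proof. by leibniz_axiom hA. Qed.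
Lemma addaC (x y : A) : aadd x y = aadd y x.
Proof. by leibniz_axiom hA. Qed.
Lemma add0a (x : A) : aadd azero x = x.
Proof. by leibniz_axiom hA. Qed.
Lemma addNa (x : A) : aadd (aopp x) x = azero.
Proof. by leibniz_axiom hA. Qed.
Lemma scaleaA (a b : K) (x : A) : ascale a (ascale b x) = ascale (a * b) x.
Proof. by leibniz_axiom hA. Qed.
Lemma scale1a (x : A) : ascale 1 x = x.
Proof. by leibniz_axiom hA. Qed.
Lemma scaleaDr (a : K) (x y : A) : ascale a (aadd x y) = aadd (ascale a x) (ascale a y).
Proof. by leibniz_axiom hA. Qed.
Lemma scaleaDl (a b : K) (x : A) : ascale (a + b) x = aadd (ascale a x) (ascale b x).
Proof. by leibniz_axiom hA. Qed.
Lemma brDl (x y z : A) : abr (aadd x y) z = aadd (abr x z) (abr y z).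
Proof. by leibniz_axiom hA. Qed.
Lemma brDr (x y z : A) : abr x (aadd y z) = aadd (abr x y) (abr x z).
Proof. by leibniz_axiom hA. Qed.
Lemma brZl (a : K) (x y : A) : abr (ascale a x) y = ascale a (abr x y).
Proof. by leibniz_axiom hA. Qed.
Lemma brZr (a : K) (x y : A) : abr x (ascale a y) = ascale a (abr x y).
Proof. by leibniz_axiom hA. Qed.
Lemma br_leibniz (x y z : A) :
  abr x (abr y z) = aadd (abr (abr x y) z) (aopp (abr (abr x z) y)).
Proof. by leibniz_axiom hA. Qed.

Lemma adda0 (x : A) : aadd x azero = x.
Proof. by rewrite addaC add0a. Qed.
Lemma addaN (x : A) : aadd x (aopp x) = azero.
Proof. by rewrite addaC addNa. Qed.
Lemma addKa (x y : A) : aadd (aopp x) (aadd x y) = y.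
Proof. by rewrite addaA addNa add0a. Qed.
Lemma addaI (x y z : A) : aadd x y = aadd x z -> y = z.
Proof. by move=> e; rewrite -(addKa x y) e addKa. Qed.
Lemma adda_eq0 (x y : A) : aadd x y = azero -> y = aopp x.
Proof. by move=> e; rewrite -(addKa x y) e adda0. Qed.
Lemma scale0a (x : A) : ascale 0 x = azero.
Proof. by apply: (@addaI (ascale 0 x)); rewrite adda0 -scaleaDl addr0. Qed.
Lemma scalea0 (a : K) : ascale a (azero : A) = azero.
Proof. by apply: (@addaI (ascale a azero)); rewrite adda0 -scaleaDr add0a. Qed.
Lemma scaleN1a (x : A) : ascale (-1) x = aopp x.
Proof. by apply: adda_eq0; rewrite -{1}(scale1a x) -scaleaDl subrr scale0a. Qed.
Lemma oppaD (x y : A) : aopp (aadd x y) = aadd (aopp x) (aopp y).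
Proof. by rewrite -!scaleN1a scaleaDr. Qed.
Lemma oppaK (x : A) : aopp (aopp x) = x.
Proof. by symmetry; apply: adda_eq0; rewrite addNa. Qed.
Lemma oppa0 : aopp (azero : A) = azero.
Proof. by symmetry; apply: adda_eq0; rewrite add0a. Qed.
Lemma scaleaN (a : K) (x : A) : ascale a (aopp x) = aopp (ascale a x).
Proof. by rewrite -!scaleN1a !scaleaA mulrC. Qed.
Lemma br0l (y : A) : abr azero y = azero.
Proof. by rewrite -{1}(scale0a azero) brZl scale0a. Qed.
Lemma br0r (y : A) : abr y azero = azero.
Proof. by rewrite -{1}(scale0a azero) brZr scale0a. Qed.
Lemma brNl (x y : A) : abr (aopp x) y = aopp (abr x y).
Proof. by rewrite -!scaleN1a brZl. Qed.
Lemma brNr (x y : A) : abr x (aopp y) = aopp (abr x y).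
Proof. by rewrite -!scaleN1a brZr. Qed.
Lemma addaACA (a b c d : A) :
  aadd (aadd a b) (aadd c d) = aadd (aadd a c) (aadd b d).
Proof. by rewrite -!addaA (addaA b c) (addaC b c) -(addaA c b). Qed.

Lemma asubDD (x y x' y' : A) :
  asub (aadd x y) (aadd x' y') = aadd (asub x x') (asub y y').
Proof. by rewrite /asub oppaD addaACA. Qed.
Lemma asubZZ a (x x' : A) : asub (ascale a x) (ascale a x') = ascale a (asub x x').
Proof. by rewrite /asub scaleaDr scaleaN. Qed.
Lemma asubNN (x x' : A) : asub (aopp x) (aopp x') = aopp (asub x x').
Proof. by rewrite /asub oppaD. Qed.
Lemma adda_asub (x y z : A) : aadd (asub x y) (asub y z) = asub x z.
Proof. by rewrite /asub -addaA addKa. Qed.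
Lemma oppa_asub (x y : A) : aopp (asub x y) = asub y x.
Proof. by rewrite /asub oppaD oppaK addaC. Qed.
Lemma asubaa (x : A) : asub x x = azero.
Proof. exact: addaN. Qed.
Lemma asuba0 (x : A) : asub x azero = x.
Proof. by rewrite /asub oppa0 adda0. Qed.
Lemma asub_eq0 (x y : A) : asub x y = azero -> x = y.
Proof. by move=> e; rewrite -(oppaK y); apply: adda_eq0; rewrite addaC. Qed.
Lemma asub_brl (x y x' y' : A) :
  asub (abr x y) (abr x' y') = aadd (abr (asub x x') y) (abr x' (asub y y')).
Proof. by rewrite /asub brDl brDr brNl brNr -addaA addKa. Qed.
Lemma asub_brr (x y x' y' : A) :
  asub (abr x y) (abr x' y') = aadd (abr x (asub y y')) (abr (asub x x') y').
Proof. by rewrite /asub brDl brDr brNl brNr -addaA addKa. Qed.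

Lemma asub_symbr (x y x' y' : A) :
  asub (symbr x y) (symbr x' y') = aadd (symbr (asub x x') y) (symbr x' (asub y y')).
Proof. by rewrite /symbr asubDD asub_brl asub_brr addaACA. Qed.
Lemma br_symbr (z x y : A) : abr z (symbr x y) = azero.
Proof. by rewrite /symbr brDr !br_leibniz -addaA addKa addaN. Qed.
Lemma symbr_br (x y z : A) :
  abr (symbr x y) z = aadd (symbr (abr x z) y) (symbr x (abr y z)).
Proof.
have br_leibniz' (u v w : A) : abr (abr u v) w = aadd (abr u (abr v w)) (abr (abr u w) v).
  by rewrite br_leibniz -addaA addNa adda0.
rewrite /symbr brDl (br_leibniz' x y z) (br_leibniz' y x z).
by rewrite [RHS]addaACA [aadd (abr (abr x z) y) _]addaC.
Qed.

End LeibnizArithmetic.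

Definition hom_on (K : fieldType) (A B : alg K) (S : A -> Prop) (h : A -> B) :=
  (forall x y, S x -> S y -> h (aadd x y) = aadd (h x) (h y)) /\
  (forall a x, S x -> h (ascale a x) = ascale a (h x)) /\
  (forall x y, S x -> S y -> h (abr x y) = abr (h x) (h y)).

Definition lie_part (K : fieldType) (A : alg K) (P : A -> Prop) : A -> Prop :=
  fun x => P x /\ lie_br (@allA _ _) (@allA _ _) x.

Section Homomorphisms.
Variables (K : fieldType) (A B C : alg K).

Lemma id_hom : is_hom (fun x : A => x).
Proof. by []. Qed.

Lemma comp_hom (h : A -> B) (k : B -> C) :
  is_hom h -> is_hom k -> is_hom (fun x => k (h x)).
Proof.
case=> h0 [hD [hZ hBr]] [k0 [kD [kZ kBr]]].
by split; [|split; [|split]] => *; rewrite ?h0 ?hD ?hZ ?hBr.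
Qed.

Lemma hom_hom_on (S : A -> Prop) (h : A -> B) : is_hom h -> hom_on S h.
Proof. by case=> _ [hD [hZ hBr]]; split; [|split] => *. Qed.

Lemma comp_hom_on (S : A -> Prop) (S' : B -> Prop) (h : A -> B) (k : B -> C) :
  hom_on S h -> (forall x, S x -> S' (h x)) -> hom_on S' k ->
  hom_on S (fun x => k (h x)).
Proof.
case=> [hD [hZ hBr]] hS [kD [kZ kBr]].
by split; [|split] => *; rewrite ?hD ?hZ ?hBr ?kD ?kZ ?kBr; auto.
Qed.

Lemma sub_hom_on (S S' : A -> Prop) (h : A -> B) :
  (forall x, S' x -> S x) -> hom_on S h -> hom_on S' h.
Proof. by move=> sub [hD [hZ hBr]]; split; [|split] => *; auto. Qed.

Lemma isomorphic_sym : isomorphic A B -> isomorphic B A.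
Proof.
case=> f [[f0 [fD [fZ fBr]]] [f' fK f'K]]; exists f'; split; last by exists f.
split; [|split; [|split]].
- by rewrite -f0 fK.
- by move=> x y; rewrite -{1}(f'K x) -{1}(f'K y) -fD fK.
- by move=> a x; rewrite -{1}(f'K x) -fZ fK.
- by move=> x y; rewrite -{1}(f'K x) -{1}(f'K y) -fBr fK.
Qed.

Lemma ideal_preimage (h : A -> B) (I : B -> Prop) :
  is_hom h -> is_ideal I -> is_ideal (fun x => I (h x)).
Proof.
case=> h0 [hD [hZ hBr]] [[I0 [ID IZ]] [Il Ir]].
split; [split; [|split]|split] => *; rewrite ?h0 ?hD ?hZ ?hBr; auto.
Qed.

Lemma span_mono (X Y : A -> Prop) x :
  (forall z, X z -> Y z) -> span X x -> span Y x.
Proof.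
move=> XY; elim=> *.
- by apply: span_in; apply: XY.
- exact: span_zero.
- exact: span_add.
- exact: span_scale.
Qed.

Lemma span_hom (h : A -> B) (X : A -> Prop) (Y : B -> Prop) x :
  is_hom h -> (forall z, X z -> span Y (h z)) -> span X x -> span Y (h x).
Proof.
case=> h0 [hD [hZ _]] XY; elim=> *; rewrite ?h0 ?hD ?hZ.
- exact: XY.
- exact: span_zero.
- exact: span_add.
- exact: span_scale.
Qed.

Lemma lie_br_hom (h : A -> B) (M N : A -> Prop) (M' N' : B -> Prop) x :
  is_hom h -> (forall z, M z -> M' (h z)) -> (forall z, N z -> N' (h z)) ->
  lie_br M N x -> lie_br M' N' (h x).
Proof.
move=> hh MM' NN'; apply: span_hom => // _ [u [v [Mu [Nv ->]]]].
case: hh => _ [hD [_ hBr]]; apply: span_in; exists (h u), (h v).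
by rewrite hD !hBr; auto.
Qed.

Lemma lie_br_all_hom (h : A -> B) x :
  is_hom h -> lie_br (@allA _ _) (@allA _ _) x -> lie_br (@allA _ _) (@allA _ _) (h x).
Proof. by move=> hh; apply: lie_br_hom. Qed.

Lemma lie_br_sub_ideal (M I : A -> Prop) x : is_ideal I -> lie_br M I x -> I x.
Proof.
case=> [[I0 [ID IZ]] [Il Ir]]; elim=> [_ [y [z [_ [Iz ->]]]]|||] *; auto.
Qed.

Lemma lie_br_surj (h : A -> B) y :
  is_hom h -> (forall z, exists x, h x = z) -> lie_br (@allA _ _) (@allA _ _) y ->
  exists x, lie_br (@allA _ _) (@allA _ _) x /\ h x = y.
Proof.
case=> h0 [hD [hZ hBr]] surj.
elim=> [_ [u [v [_ [_ ->]]]]||_ _ _ [x1 [H1 <-]] _ [x2 [H2 <-]]|a _ _ [x [H <-]]].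
- have [[u' <-] [v' <-]] := (surj u, surj v).
  exists (aadd (abr u' v') (abr v' u')); rewrite hD !hBr; split=> //.
  by apply: span_in; exists u', v'.
- by exists azero; split; [apply: span_zero|].
- by exists (aadd x1 x2); split; [apply: span_add|rewrite hD].
- by exists (ascale a x); split; [apply: span_scale|rewrite hZ].
Qed.

End Homomorphisms.

Section LieIdeals.
Variables (K : fieldType) (A : alg K).
Hypothesis hA : is_leibniz A.

Lemma zero_ideal : is_ideal (fun x : A => x = azero).
Proof.
split; [split; [|split]|split] => //.
- by move=> x y -> ->; rewrite add0a.
- by move=> a x ->; rewrite scalea0.
- by move=> x y ->; rewrite br0r.
- by move=> x y ->; rewrite br0l.
Qed.

Lemma br_lie_br0 (M N : A -> Prop) z w : lie_br M N w -> abr z w = azero.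
Proof.
elim=> [_ [x [y [_ [_ ->]]]]|||].
- exact: br_symbr.
- exact: br0r.
- by move=> ? ? _ e1 _ e2; rewrite (brDr hA) e1 e2 add0a.
- by move=> ? ? _ e; rewrite (brZr hA) e scalea0.
Qed.

Lemma lie_br_brr (N : A -> Prop) w z :
  (forall x y, N x -> N (abr x y)) ->
  lie_br (@allA _ _) N w -> lie_br (@allA _ _) N (abr w z).
Proof.
move=> NBr; elim=> [_ [x [y [_ [Ny ->]]]]|||].
- rewrite -/(symbr x y) (symbr_br hA); apply: span_add; apply: span_in.
    by exists (abr x z), y.
  by exists x, (abr y z); split; [|split; [apply: NBr|]].
- by rewrite (br0l hA); apply: span_zero.
- by move=> *; rewrite (brDl hA); apply: span_add.
- by move=> *; rewrite (brZl hA); apply: span_scale.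
Qed.

End LieIdeals.

Section HomOnLeibniz.
Variables (K : fieldType) (A B : alg K).
Hypotheses (hA : is_leibniz A) (hB : is_leibniz B).
Variables (S : A -> Prop) (h : A -> B).
Hypothesis hh : hom_on S h.

Lemma hom_on0 : S azero -> h azero = azero.
Proof.
case: hh => _ [hZ _] S0.
by rewrite -(scale0a hA azero) hZ // (scale0a hB).
Qed.

Lemma hom_on_sub x y : (forall a z, S z -> S (ascale a z)) -> S x -> S y ->
  h (asub x y) = asub (h x) (h y).
Proof.
case: hh => hD [hZ _] SZ Sx Sy.
have SNy : S (aopp y) by rewrite -(scaleN1a hA); apply: SZ.
by rewrite /asub hD // -(scaleN1a hA) hZ // (scaleN1a hB).
Qed.

End HomOnLeibniz.

Lemma hom_sub (K : fieldType) (A B : alg K) (h : A -> B) :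
  is_leibniz A -> is_leibniz B -> is_hom h -> forall x y, h (asub x y) = asub (h x) (h y).
Proof. by move=> hA hB hh x y; apply: (hom_on_sub hA hB (hom_hom_on (@allA _ _) hh)). Qed.

Record ideal_of (K : fieldType) (A : alg K) (S N : A -> Prop) : Prop := IdealOf {
  subalg0 : S azero;
  subalgD : forall x y, S x -> S y -> S (aadd x y);
  subalgZ : forall a x, S x -> S (ascale a x);
  subalgBr : forall x y, S x -> S y -> S (abr x y);
  ideal0 : N azero;
  idealD : forall x y, N x -> N y -> N (aadd x y);
  idealZ : forall a x, N x -> N (ascale a x);
  ideal_sub : forall x, N x -> S x;
  idealBrl : forall x y, N x -> S y -> N (abr x y);
  idealBrr : forall x y, S x -> N y -> N (abr x y) }.

Section IdealsOf.
Variables (K : fieldType) (A : alg K).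
Hypothesis hA : is_leibniz A.

Lemma ideal_of_quotient (I : A -> Prop) : is_ideal I -> ideal_of (@allA _ _) I.
Proof. by case=> [[I0 [ID IZ]] [Il Ir]]; split=> // x y *; [apply: Ir|apply: Il]. Qed.

Lemma ideal_of_zero (S : A -> Prop) :
  is_subspace S -> (forall x y, S x -> S y -> S (abr x y)) ->
  ideal_of S (fun x => x = azero).
Proof.
case=> S0 [SD SZ] SBr; split=> //.
- by move=> x y -> ->; rewrite add0a.
- by move=> a x ->; rewrite scalea0.
- by move=> x ->.
- by move=> x y -> _; rewrite br0l.
- by move=> x y _ ->; rewrite br0r.
Qed.

Lemma ideal_of_lie_part (P R : A -> Prop) :
  is_ideal P -> is_ideal R -> (forall x, R x -> P x) ->
  ideal_of (lie_part P) (lie_br (@allA _ _) R).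
Proof.
move=> hP hR RP; have [[P0 [PD PZ]] [Pl Pr]] := hP; have [_ [_ Rr]] := hR.
split.
- by split=> //; apply: span_zero.
- by move=> x y [? ?] [? ?]; split; [apply: PD|apply: span_add].
- by move=> a x [? ?]; split; [apply: PZ|apply: span_scale].
- by move=> x y [? ?] _; split; [apply: Pr|apply: lie_br_brr => *].
- exact: span_zero.
- by move=> *; apply: span_add.
- by move=> *; apply: span_scale.
- move=> x Nx; split; first exact/RP/(lie_br_sub_ideal hR Nx).
  by apply: span_mono Nx => _ [u [v [_ [_ ->]]]]; exists u, v.
- by move=> x y Nx _; apply: lie_br_brr.
- by move=> x y _ Ny; rewrite (br_lie_br0 hA x Ny); apply: span_zero.
Qed.

End IdealsOf.

Lemma bij_of_inj_surj (T U : Type) (f : T -> U) :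
  injective f -> (forall u, exists t, f t = u) -> bijective f.
Proof.
move=> f_inj f_surj.
pose f' u := proj1_sig (constructive_indefinite_description _ (f_surj u)).
have f'K u : f (f' u) = u by rewrite /f'; case: constructive_indefinite_description.
by exists f' => // t; apply: f_inj; rewrite f'K.
Qed.

Lemma leibniz_image (K : fieldType) (A B : alg K) (S : A -> Prop) (f : A -> B) :
  is_leibniz A -> is_subspace S -> (forall x y, S x -> S y -> S (abr x y)) ->
  (forall z, exists x, S x /\ f x = z) ->
  f azero = azero -> (forall x, S x -> f (aopp x) = aopp (f x)) -> hom_on S f ->
  is_leibniz B.
Proof.
move=> hA [S0 [SD SZ]] SBr f_surj f0 fN [fD [fZ fBr]].
have SN x : S x -> S (aopp x) by rewrite -(scaleN1a hA); apply: SZ.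
repeat split; intros;
  repeat match goal with z : car B |- _ => have [? [? <-]] := f_surj z; clear z end;
  rewrite -?f0;
  repeat first [rewrite -fD | rewrite -fN | rewrite -fZ | rewrite -fBr];
  repeat first [assumption | apply SD | apply SZ | apply SBr | apply SN].
all: by f_equal; leibniz_axiom hA.
Qed.

Section Subquotient.
Variables (K : fieldType) (A : alg K).
Hypothesis hA : is_leibniz A.
Variables (S N : A -> Prop).
Hypothesis hSN : ideal_of S N.
Variable hS0 : S azero.

Local Notation Q := (subquot N hS0).
Local Notation mk x := (sq_mk N hS0 x : car Q).

Lemma subalgN x : S x -> S (aopp x).
Proof. by move=> Sx; rewrite -(scaleN1a hA); apply: (subalgZ hSN). Qed.

Lemma idealN x : N x -> N (aopp x).
Proof. by move=> Nx; rewrite -(scaleN1a hA); apply: (idealZ hSN). Qed.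

Lemma sq_repP (c : sq_car S N) : S (sq_rep c) /\ proj1_sig c = cls N (sq_rep c).
Proof. exact: (proj2_sig (constructive_indefinite_description _ (proj2_sig c))). Qed.

Lemma sq_repS (c : sq_car S N) : S (sq_rep c).
Proof. by case: (sq_repP c). Qed.

Lemma cls_eq x y : N (asub x y) -> cls N x = cls N y.
Proof.
move=> Nxy; apply: functional_extensionality => z; apply: propositional_extensionality.
change (N (asub z x) <-> N (asub z y)); split=> Nz.
- by rewrite -(adda_asub hA z x y); apply: (idealD hSN).
- rewrite -(adda_asub hA z y x) -(oppa_asub hA x y).
  by apply: (idealD hSN) => //; apply: idealN.
Qed.

Lemma eq_sq_mk x y : S x -> S y -> mk x = mk y <-> N (asub x y).
Proof.
rewrite /sq_mk => Sx Sy.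
case: excluded_middle_informative => // hx; case: excluded_middle_informative => // hy.
split=> [/(f_equal (@proj1_sig _ _)) /= cls_xy|Nxy].
- have : cls N x x by rewrite /cls -/(asub x x) asubaa //; apply: (ideal0 hSN).
  by rewrite cls_xy.
- by apply: eq_sig_hprop => [*|/=]; [apply: proof_irrelevance|apply: cls_eq].
Qed.

Lemma sq_repK (c : Q) : mk (sq_rep c) = c.
Proof.
have [Sc c_cls] := sq_repP c; rewrite /sq_mk.
case: excluded_middle_informative => [h|//].
by apply: eq_sig_hprop => [*|/=]; [apply: proof_irrelevance|rewrite c_cls].
Qed.

Lemma sq_mk_surj (c : Q) : exists x, S x /\ c = mk x.
Proof. by exists (sq_rep c); rewrite sq_repK; split=> //; apply: sq_repS. Qed.

Lemma sq_mk_rep x : S x -> N (asub x (sq_rep (mk x))).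
Proof. by move=> Sx; apply/eq_sq_mk => //; [apply: sq_repS|rewrite sq_repK]. Qed.

Local Ltac subalg_closed := repeat first [ assumption | apply: sq_repS
  | apply: (subalgD hSN) | apply: (subalgZ hSN) | apply: (subalgBr hSN)
  | apply: subalgN | apply: (subalg0 hSN) ].

Lemma sq_mk0 : mk azero = azero.
Proof.
rewrite /sq_mk; case: excluded_middle_informative => h //.
by apply: eq_sig_hprop => [*|//]; apply: proof_irrelevance.
Qed.

Lemma sq_mkD x y : S x -> S y -> mk (aadd x y) = aadd (mk x) (mk y).
Proof.
move=> Sx Sy; apply/eq_sq_mk; try subalg_closed.
by rewrite asubDD //; apply: (idealD hSN); apply: sq_mk_rep.
Qed.

Lemma sq_mkN x : S x -> mk (aopp x) = aopp (mk x).
Proof.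
move=> Sx; apply/eq_sq_mk; try subalg_closed.
by rewrite asubNN //; apply: idealN; apply: sq_mk_rep.
Qed.

Lemma sq_mkZ a x : S x -> mk (ascale a x) = ascale a (mk x).
Proof.
move=> Sx; apply/eq_sq_mk; try subalg_closed.
by rewrite asubZZ //; apply: (idealZ hSN); apply: sq_mk_rep.
Qed.

Lemma sq_mkBr x y : S x -> S y -> mk (abr x y) = abr (mk x) (mk y).
Proof.
move=> Sx Sy; apply/eq_sq_mk; try subalg_closed.
rewrite asub_brl //; apply: (idealD hSN).
  by apply: (idealBrl hSN) => //; apply: sq_mk_rep.
by apply: (idealBrr hSN); [apply: sq_repS|apply: sq_mk_rep].
Qed.

Lemma sq_mk_hom_on : hom_on S (fun x => mk x).
Proof. by split; [|split] => *; rewrite ?sq_mkD ?sq_mkZ ?sq_mkBr. Qed.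

Lemma subquot_leibniz : is_leibniz Q.
Proof.
apply: (leibniz_image hA (S := S) (f := fun x => mk x)).
- by split; [|split] => *; subalg_closed.
- by move=> *; subalg_closed.
- by move=> c; have [x [Sx ->]] := sq_mk_surj c; exists x.
- exact: sq_mk0.
- exact: sq_mkN.
- exact: sq_mk_hom_on.
Qed.

Lemma sq_mk_eq0 x : S x -> mk x = azero <-> N x.
Proof. by move=> Sx; rewrite -sq_mk0 eq_sq_mk ?asuba0 //; apply: (subalg0 hSN). Qed.

Variables (B : alg K) (h : A -> B).
Hypotheses (hB : is_leibniz B) (hh : hom_on S h) (hN : forall x, N x -> h x = azero).

Definition sq_ind (c : Q) : B := h (sq_rep c).

Lemma sq_ind_mk x : S x -> sq_ind (mk x) = h x.
Proof.
move=> Sx; symmetry; apply: (asub_eq0 hB); rewrite /sq_ind.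
rewrite -(hom_on_sub hA hB hh (subalgZ hSN) Sx (sq_repS _)).
by apply: hN; apply: sq_mk_rep.
Qed.

Lemma sq_ind_hom : is_hom sq_ind.
Proof.
have [hD [hZ hBr]] := hh.
split; [|split; [|split]].
- by rewrite -sq_mk0 sq_ind_mk ?(hom_on0 hA hB hh) //; apply: (subalg0 hSN).
- move=> c d; have [x [Sx ->]] := sq_mk_surj c; have [y [Sy ->]] := sq_mk_surj d.
  by rewrite -sq_mkD // !sq_ind_mk ?hD //; apply: (subalgD hSN).
- move=> a c; have [x [Sx ->]] := sq_mk_surj c.
  by rewrite -sq_mkZ // !sq_ind_mk ?hZ //; apply: (subalgZ hSN).
- move=> c d; have [x [Sx ->]] := sq_mk_surj c; have [y [Sy ->]] := sq_mk_surj d.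
  by rewrite -sq_mkBr // !sq_ind_mk ?hBr //; apply: (subalgBr hSN).
Qed.

Lemma sq_ind_surj :
  (forall z, exists x, S x /\ h x = z) -> forall z, exists c, sq_ind c = z.
Proof.
by move=> h_surj z; have [x [Sx <-]] := h_surj z; exists (mk x); apply: sq_ind_mk.
Qed.

Lemma subquot_first_iso :
  (forall x, S x -> h x = azero -> N x) -> (forall z, exists x, S x /\ h x = z) ->
  isomorphic Q B.
Proof.
move=> ker_h h_surj; exists sq_ind; split; first exact: sq_ind_hom.
apply: bij_of_inj_surj; last exact: sq_ind_surj.
move=> c d; have [x [Sx ->]] := sq_mk_surj c; have [y [Sy ->]] := sq_mk_surj d.
rewrite !sq_ind_mk // => hxy; apply/eq_sq_mk => //; apply: ker_h.
  by apply: (subalgD hSN) => //; apply: subalgN.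
by rewrite (hom_on_sub hA hB hh (subalgZ hSN)) // hxy asubaa.
Qed.

End Subquotient.

Lemma lie_br_hom_asub (K : fieldType) (A : alg K) (gam : A -> A) (R : A -> Prop) y :
  is_leibniz A -> is_hom gam -> (forall u, R (asub (gam u) u)) ->
  lie_br (@allA _ _) (@allA _ _) y -> lie_br (@allA _ _) R (asub (gam y) y).
Proof.
move=> hA [gam0 [gamD [gamZ gamBr]]] R_gam.
elim=> [_ [u [v [_ [_ ->]]]]||? ? _ IH1 _ IH2|? ? _ IH].
- rewrite gamD !gamBr -!/(symbr _ _) asub_symbr //.
  apply: span_add; apply: span_in.
    by exists (gam v), (asub (gam u) u); rewrite /symbr addaC.
  by exists u, (asub (gam v) v).
- by rewrite gam0 asubaa //; apply: span_zero.
- by rewrite gamD asubDD //; apply: span_add.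
- by rewrite gamZ asubZZ //; apply: span_scale.
Qed.

Section QuotientMap.
Variables (K : fieldType) (A : alg K) (I : A -> Prop).
Hypotheses (hA : is_leibniz A) (hI : is_ideal I).

Definition quot_mk (x : A) : quotient I := sq_mk I Logic.I x.

Lemma quot_mk_hom : is_hom quot_mk.
Proof.
have hAI := ideal_of_quotient hI.
have [mkD [mkZ mkBr]] := sq_mk_hom_on hA hAI Logic.I.
by split; [exact: sq_mk0|split; [|split]] => *; [apply: mkD|apply: mkZ|apply: mkBr].
Qed.

Lemma quotient_leibniz : is_leibniz (quotient I).
Proof. exact: (subquot_leibniz hA (ideal_of_quotient hI)). Qed.

Lemma quot_mk_eq0 x : quot_mk x = azero <-> I x.
Proof. exact: (sq_mk_eq0 hA (ideal_of_quotient hI)). Qed.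

Lemma quot_mk_surj (y : quotient I) : exists x, quot_mk x = y.
Proof. by have [x [_ ->]] := sq_mk_surj y; exists x. Qed.

End QuotientMap.

Section FreePresentations.
Variables (K : fieldType) (A : alg K) (P : free_pres A).

Local Notation pi := (@fp_pi _ _ P).
Local Notation gen := (@fp_i _ _ P).

Lemma fp_F_leibniz : is_leibniz (fp_F P).
Proof. exact: proj1 (fp_free P). Qed.

Lemma fp_R_ideal : is_leibniz A -> is_ideal (@fp_R _ _ P).
Proof. by move=> hA; apply: ideal_preimage (fp_hom P) (zero_ideal hA). Qed.

Lemma ideal_of_schur :
  is_leibniz A -> ideal_of (lie_part (@fp_R _ _ P)) (lie_br (@allA _ _) (@fp_R _ _ P)).
Proof.
move=> hA; have hR := fp_R_ideal hA.
exact: (ideal_of_lie_part fp_F_leibniz hR hR).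
Qed.

Lemma free_pres_lift (B C : alg K) (f : A -> B) (p : C -> B) :
  is_leibniz B -> is_leibniz C -> is_hom f -> is_hom p -> (forall y, exists x, p x = y) ->
  exists al : fp_F P -> C, is_hom al /\ forall x, p (al x) = f (pi x).
Proof.
move=> hB hC hf hp p_surj.
pose lift x := proj1_sig (constructive_indefinite_description _ (p_surj (f (pi (gen x))))).
have liftP x : p (lift x) = f (pi (gen x)).
  by rewrite /lift; case: constructive_indefinite_description.
have [al [[hal alP] _]] := proj2 (fp_free P) C hC lift.
exists al; split=> // z.
have [phi [_ phi_uniq]] := proj2 (fp_free P) B hB (fun x => f (pi (gen x))).
have phi_al : phi = (fun z => p (al z)).
  by apply: phi_uniq; split; [exact: comp_hom|move=> x; rewrite alP liftP].
have phi_pi : phi = (fun z => f (pi z)).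
  by apply: phi_uniq; split; [exact: comp_hom (fp_hom P) hf|].
by have := equal_f (etrans (esym phi_al) phi_pi) z.
Qed.

End FreePresentations.

Section CoveringAlgebra.
Variables (K : fieldType) (g : alg K) (b : g -> Prop).
Hypotheses (hg : is_leibniz g) (hb : is_ideal b).
Variable Pg : free_pres g.

Local Notation F := (fp_F Pg).
Local Notation pi := (@fp_pi _ _ Pg).
Local Notation r := (@fp_R _ _ Pg).
Local Notation hF := (fp_F_leibniz Pg).
Local Notation hpi := (fp_hom Pg).

Definition s_lie : F -> Prop := lie_part (fun x => b (pi x)).
Definition fr_lie : F -> Prop := lie_br (@allA _ _) r.

Lemma s_lie0 : s_lie azero.
Proof. by split; [rewrite (hom_zero hpi); apply: ideal_zero hb|apply: span_zero]. Qed.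

Lemma ideal_of_s_lie : ideal_of s_lie fr_lie.
Proof.
apply: (ideal_of_lie_part hF (ideal_preimage hpi hb) (fp_R_ideal Pg hg)).
by move=> x; rewrite /fp_R => ->; apply: ideal_zero hb.
Qed.

Definition q : alg K := subquot fr_lie s_lie0.

Local Notation mk x := (sq_mk fr_lie s_lie0 x : car q).

Lemma q_leibniz : is_leibniz q.
Proof. exact: (subquot_leibniz hF ideal_of_s_lie s_lie0). Qed.

Lemma fr_lie_ker x : fr_lie x -> pi x = azero.
Proof. exact: lie_br_sub_ideal (fp_R_ideal Pg hg). Qed.

Definition theta : q -> g := sq_ind (N := fr_lie) (hS0 := s_lie0) pi.

Lemma theta_mk x : s_lie x -> theta (mk x) = pi x.
Proof.
exact: (sq_ind_mk hF ideal_of_s_lie s_lie0 hg (hom_hom_on _ hpi) fr_lie_ker).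
Qed.

Lemma theta_hom : is_hom theta.
Proof.
exact: (sq_ind_hom hF ideal_of_s_lie s_lie0 hg (hom_hom_on _ hpi) fr_lie_ker).
Qed.

Definition m (c : q) : Prop := theta c = azero.

Lemma m_ideal : is_ideal m.
Proof. exact: ideal_preimage theta_hom (zero_ideal hg). Qed.

Lemma theta_lie_b c : lie_br (@allA _ _) (@allA _ _) (theta c) /\ b (theta c).
Proof.
have [x [[bx Lx] ->]] := sq_mk_surj c; rewrite theta_mk //.
by split=> //; apply: lie_br_all_hom hpi Lx.
Qed.

Lemma lie_b_iso :
  isomorphic (@subalg K g (fun x => lie_br (@allA _ g) (@allA _ g) x /\ b x)
                (conj (span_zero _) (ideal_zero hb)))
             (quotient m).
Proof.
set X := fun x => _ /\ _; set X0 := conj _ _.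
have hX : ideal_of X (fun x => x = azero).
  have [[_ [bD bZ]] [_ bBr]] := hb.
  apply: (ideal_of_zero hg); first split; [exact: X0|split|].
  - by move=> x y [? ?] [? ?]; split; [apply: span_add|apply: bD].
  - by move=> a x [? ?]; split; [apply: span_scale|apply: bZ].
  - by move=> x y [? ?] _; split; [apply: lie_br_brr => *|apply: bBr].
pose h c := sq_mk (S := X) (fun x => x = azero) X0 (theta c) : car (subalg X0).
apply: isomorphic_sym; rewrite /quotient /subalg.
apply: (subquot_first_iso q_leibniz (ideal_of_quotient m_ideal) Logic.I
  (subquot_leibniz hg hX X0) (h := h)).
- exact: (comp_hom_on (hom_hom_on _ theta_hom) (fun c _ => theta_lie_b c)
    (sq_mk_hom_on hg hX X0)).
- by move=> c mc; rewrite /h mc sq_mk0.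
- by move=> c _ /(sq_mk_eq0 hg hX X0 (theta_lie_b c)).
- move=> z; have [y [[Ly By] ->]] := sq_mk_surj z.
  have [x [Lx pix]] := lie_br_surj hpi (fp_surj Pg) Ly.
  have Sx : s_lie x by split; rewrite ?pix.
  by exists (mk x); rewrite /h theta_mk // pix.
Qed.

Lemma m_schur_iso : isomorphic (subalg (ideal_zero m_ideal)) (schur_lie Pg).
Proof.
have [m_sub [_ m_br]] := m_ideal.
have hm : ideal_of m (fun c => c = azero).
  by apply: (ideal_of_zero q_leibniz m_sub) => c d mc _; apply: m_br.
pose h x := sq_mk (S := m) (fun c => c = azero) (ideal_zero m_ideal) (mk x)
  : car (subalg (ideal_zero m_ideal)).
have r_s x : lie_part r x -> s_lie x.
  by case=> rx Lx; split=> //; rewrite rx; apply: ideal_zero hb.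
have mk_m x : lie_part r x -> m (mk x).
  by move=> rx; rewrite /m theta_mk; [case: rx|exact: r_s].
apply: isomorphic_sym; rewrite /schur_lie /subalg.
apply: (subquot_first_iso hF (ideal_of_schur Pg hg) _
  (subquot_leibniz q_leibniz hm _) (h := h)).
- exact: (comp_hom_on (sub_hom_on r_s (sq_mk_hom_on hF ideal_of_s_lie s_lie0))
    mk_m (sq_mk_hom_on q_leibniz hm _)).
- move=> x Nx; rewrite /h.
  have -> : mk x = azero.
    by apply/(sq_mk_eq0 hF ideal_of_s_lie) => //; apply: (ideal_sub ideal_of_s_lie).
  exact: sq_mk0.
- move=> x rx /(sq_mk_eq0 q_leibniz hm _ (mk_m x rx)).
  by move/(sq_mk_eq0 hF ideal_of_s_lie s_lie0 (r_s x rx)).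
- move=> z; have [c [mc ->]] := sq_mk_surj z; have [x [Sx xc]] := sq_mk_surj c.
  exists x; split; last by rewrite /h xc.
  by split; [move: mc; rewrite /m xc theta_mk|case: Sx].
Qed.

Section LiftToQuotient.
Variable Pa : free_pres (quotient b).

Local Notation rho := (quot_mk b).
Local Notation Fa := (fp_F Pa).
Local Notation pia := (@fp_pi _ _ Pa).
Local Notation ra := (@fp_R _ _ Pa).
Local Notation mka x := (sq_mk (S := lie_part ra) (lie_br (@allA _ _) ra)
  (conj (hom_zero (fp_hom Pa)) (span_zero _)) x : car (schur_lie Pa)).

Variables (al : F -> Fa) (be : Fa -> F).
Hypotheses (hal : is_hom al) (alP : forall x, pia (al x) = rho (pi x)).
Hypotheses (hbe : is_hom be) (beP : forall y, rho (pi (be y)) = pia y).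

Lemma lift_s_lie x : s_lie x -> lie_part ra (al x).
Proof.
case=> bx Lx; split; last exact: lie_br_all_hom hal Lx.
by rewrite /fp_R alP; apply/(quot_mk_eq0 hg hb).
Qed.

Lemma lift_fr_lie x : fr_lie x -> lie_br (@allA _ _) ra (al x).
Proof.
apply: lie_br_hom => // z rz.
by rewrite /fp_R alP rz (hom_zero (quot_mk_hom hg hb)).
Qed.

Lemma lift_back_s_lie y : lie_part ra y -> s_lie (be y).
Proof.
case=> ray Ly; split; last exact: lie_br_all_hom hbe Ly.
by apply/(quot_mk_eq0 hg hb); rewrite beP.
Qed.

Lemma lift_back_congr y : lie_part ra y -> lie_br (@allA _ _) ra (asub (al (be y)) y).
Proof.
case=> _ Ly; apply: (lie_br_hom_asub (fp_F_leibniz Pa) (comp_hom hbe hal)) Ly => u.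
have ha := quotient_leibniz hg hb.
by rewrite /fp_R (hom_sub (fp_F_leibniz Pa) ha (fp_hom Pa)) alP beP asubaa.
Qed.

Lemma schur_quotient_epi_of_lifts : epimorphic_image_of (schur_lie Pa) q.
Proof.
have hFa := fp_F_leibniz Pa; have hMa := ideal_of_schur Pa (quotient_leibniz hg hb).
have hh : hom_on s_lie (fun x => mka (al x)).
  exact: (comp_hom_on (hom_hom_on _ hal) lift_s_lie (sq_mk_hom_on hFa hMa _)).
have hN x : fr_lie x -> mka (al x) = azero.
  move=> Nx; apply/(sq_mk_eq0 hFa hMa); last exact: lift_fr_lie.
  exact/lift_s_lie/(ideal_sub ideal_of_s_lie).
have hMa_leib := subquot_leibniz hFa hMa (conj (hom_zero (fp_hom Pa)) (span_zero _)).
exists (sq_ind (N := fr_lie) (hS0 := s_lie0) (fun x => mka (al x))); split.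
  exact: (sq_ind_hom hF ideal_of_s_lie s_lie0 hMa_leib hh hN).
apply: (sq_ind_surj hF ideal_of_s_lie s_lie0 hMa_leib hh hN) => z.
have [y [May ->]] := sq_mk_surj z.
exists (be y); split; first exact: lift_back_s_lie.
apply/(eq_sq_mk hFa hMa) => //; first exact/lift_s_lie/lift_back_s_lie.
exact: lift_back_congr.
Qed.

End LiftToQuotient.

Lemma schur_quotient_epi (Pa : free_pres (quotient b)) :
  epimorphic_image_of (schur_lie Pa) q.
Proof.
have ha := quotient_leibniz hg hb; have hrho := quot_mk_hom hg hb.
have [al [hal alP]] := free_pres_lift Pg ha (fp_F_leibniz Pa) hrho (fp_hom Pa) (fp_surj Pa).
have rho_pi_surj y : exists x, quot_mk b (pi x) = y.
  have [u <-] := quot_mk_surj y; have [x <-] := fp_surj Pg u; by exists x.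
have [be [hbe beP]] :=
  free_pres_lift Pa ha hF (@id_hom _ _) (comp_hom hpi hrho) rho_pi_surj.
exact: (schur_quotient_epi_of_lifts hal alP hbe beP).
Qed.

End CoveringAlgebra.

Unset Implicit Arguments.

Theorem mainTheorem3 (K : fieldType) (hK : (2%:R != 0 :> K)%R)
  (g : alg K) (hg : is_leibniz g) (b : g -> Prop) (hb : is_ideal b)
  (Pg : free_pres g) (Pa : free_pres (quotient b)) :
  exists (q : alg K) (m : q -> Prop) (hm : is_ideal m),
    is_leibniz q /\
    (* (a) [g,g]_Lie ∩ b ≅ q/m *)
    isomorphic
      (@subalg K g (fun x => lie_br (@allA _ g) (@allA _ g) x /\ b x)
         (conj (span_zero _) (ideal_zero hb)))
      (quotient m) /\
    (* (b) m ≅ M^Lie(g) *)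
    isomorphic (subalg (ideal_zero hm)) (schur_lie Pg) /\
    (* (c) M^Lie(g/b) is an epimorphic image of q *)
    epimorphic_image_of (schur_lie Pa) q.
Proof.
exists (q hb Pg), (m (hb := hb) (Pg := Pg)), (m_ideal hg hb Pg).
split; first exact: q_leibniz.
split; first exact: lie_b_iso.
split; first exact: m_schur_iso.
exact: schur_quotient_epi.
Qed.
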